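(* Let $(Q,\langle\mathsf{out},\delta\rangle)$ be a finite probabilistic automaton over a finite alphabet $A$, and let $E\subseteq A^*$ be consistent with $\varepsilon\in E$. Then the restriction map $[0,1]^{A^*}\to[0,1]^E$, $\sigma\mapsto\sigma|_E$, restricts to a bijection (an isomorphism of convex sets) from the image of $\mathsf{obs}$ onto the image of $\overline{\mathsf{row}}_E$.
   Context: A probabilistic automaton consists of a finite set of states $Q$, a transition function $\delta:Q\to\mathcal{D}(Q)^A$ and an output function $\mathsf{out}:Q\to[0,1]$, where $\mathcal{D}(Q)$ is the set of probability distributions on $Q$. Extend to $\mathcal{D}(Q)$ by $\overline{\delta}(v)(a)=\sum_{q}v(q)\,\delta(q)(a)$. Define $\mathsf{obs}:\mathcal{D}(Q)\to[0,1]^{A^*}$ by $\mathsf{obs}(v)(\varepsilon)=\sum_q v(q)\,\mathsf{out}(q)$ and $\mathsf{obs}(v)(aw)=\mathsf{obs}(\overline{\delta}(v)(a))(w)$. For $E\subseteq A^*$, $\overline{\mathsf{row}}_E:\mathcal{D}(Q)\to[0,1]^E$ is $\overline{\mathsf{row}}_E(v)(e)=\mathsf{obs}(v)(e)$; write $v_1\equiv_E v_2$ if $\overline{\mathsf{row}}_E(v_1)=\overline{\mathsf{row}}_E(v_2)$. $E$ is consistent if $v_1\equiv_E v_2$ implies $v_1\equiv_{AE}v_2$ for all $v_1,v_2\in\mathcal{D}(Q)$, where $AE=\{ae\mid a\in A,e\in E\}$. *)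

From mathcomp Require Import all_boot all_order all_algebra.
Set Implicit Arguments. Unset Strict Implicit. Unset Printing Implicit Defensive.
Import Order.TTheory GRing.Theory Num.Theory.
Local Open Scope ring_scope.

Section PA.
Variables (R : realFieldType) (Q A : finType).

Definition is_dist (v : {ffun Q -> R}) : Prop :=
  (forall q, 0 <= v q) /\ \sum_q v q = 1.

Definition is_PA (out : Q -> R) (delta : Q -> A -> {ffun Q -> R}) : Prop :=
  (forall q, 0 <= out q <= 1) /\ (forall q a, is_dist (delta q a)).

Definition deltabar (delta : Q -> A -> {ffun Q -> R}) (v : {ffun Q -> R}) (a : A)
  : {ffun Q -> R} := [ffun q' => \sum_q v q * delta q a q'].

Fixpoint obs (out : Q -> R) (delta : Q -> A -> {ffun Q -> R})
   (v : {ffun Q -> R}) (w : seq A) {struct w} : R :=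
  match w with
  | [::] => \sum_q v q * out q
  | a :: w' => obs out delta (deltabar delta v a) w'
  end.

(* elements of E, i.e. the index set of [0,1]^E *)
Definition word_in (E : {pred seq A}) := {e : seq A | e \in E}.

Definition rowE (out : Q -> R) (delta : Q -> A -> {ffun Q -> R})
   (E : {pred seq A}) (v : {ffun Q -> R}) : word_in E -> R :=
  fun e => obs out delta v (sval e).

Definition restrictE (E : {pred seq A}) (s : seq A -> R) : word_in E -> R :=
  fun e => s (sval e).

Definition equivE out delta (E : {pred seq A}) (v1 v2 : {ffun Q -> R}) : Prop :=
  forall e, e \in E -> obs out delta v1 e = obs out delta v2 e.

Definition consistent out delta (E : {pred seq A}) : Prop :=
  forall v1 v2, is_dist v1 -> is_dist v2 -> equivE out delta E v1 v2 ->
    forall a e, e \in E -> obs out delta v1 (a :: e) = obs out delta v2 (a :: e).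

Definition im_obs out delta (s : seq A -> R) : Prop :=
  exists2 v, is_dist v & s = obs out delta v.

End PA.
Arguments rowE {R Q A} out delta E v _.
Arguments restrictE {R A} E s _.

Definition im_rowE {R : realFieldType} {Q A : finType} (out : Q -> R)
  (delta : Q -> A -> {ffun Q -> R}) (E : {pred seq A}) (t : word_in E -> R) : Prop :=
  exists2 v, is_dist v & t = rowE out delta E v.

Arguments im_rowE {R Q A} out delta E t.

From Pilot Require Import Defs.
From mathcomp Require Import all_boot all_order all_algebra.
From Stdlib Require Import FunctionalExtensionality.
Import Order.TTheory GRing.Theory Num.Theory.
Set Implicit Arguments. Unset Strict Implicit. Unset Printing Implicit Defensive.
Local Open Scope ring_scope.

(* The restriction sigma |-> sigma|_E maps obs v to row_E v, so it sends the
   image of obs onto the image of row_E; the content of the theorem is that it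
   is injective there.  Injectivity is the statement that for distributions
   v1, v2, agreement on E (v1 ==_E v2) forces obs v1 = obs v2.  We prove this
   by induction on words:
   - the extension deltabar preserves distributions;
   - since obs (deltabar v a) e = obs v (a e), consistency of E says exactly
     that ==_E between distributions is preserved by every deltabar _ a;
   - hence, for every word w, v1 ==_E v2 implies obs v1 w = obs v2 w, the base
     case w = eps being the hypothesis eps \in E. *)

Section Observations.
Variables (R : realFieldType) (Q A : finType).
Variables (out : Q -> R) (delta : Q -> A -> {ffun Q -> R}).

(* Pushing a distribution through a stochastic transition gives a
   distribution; this lets consistency be applied after every letter. *)
Lemma deltabar_dist (v : {ffun Q -> R}) (a : A) :
  (forall q b, is_dist (delta q b)) -> is_dist v -> is_dist (deltabar delta v a).
Proof.
move=> delta_dist [v_ge0 v_sum1]; split.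
  move=> q'; rewrite ffunE; apply: sumr_ge0 => q _.
  by apply: mulr_ge0 => //; case: (delta_dist q a).
under eq_bigr do rewrite ffunE.
rewrite exchange_big /= -v_sum1; apply: eq_bigr => q _.
by rewrite -mulr_sumr; case: (delta_dist q a) => _ ->; rewrite mulr1.
Qed.

Variable E : {pred seq A}.

Lemma consistent_deltabar (v1 v2 : {ffun Q -> R}) (a : A) :
  consistent out delta E -> is_dist v1 -> is_dist v2 ->
  equivE out delta E v1 v2 ->
  equivE out delta E (deltabar delta v1 a) (deltabar delta v2 a).
Proof. by move=> cons dist1 dist2 eqE e inE; apply: cons. Qed.

Lemma equivE_obs (v1 v2 : {ffun Q -> R}) :
  (forall q a, is_dist (delta q a)) -> consistent out delta E -> [::] \in E ->
  is_dist v1 -> is_dist v2 -> equivE out delta E v1 v2 ->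
  obs out delta v1 = obs out delta v2.
Proof.
move=> delta_dist cons epsE dist1 dist2 eqE; apply: functional_extensionality => w.
elim: w v1 v2 dist1 dist2 eqE => [|a w IHw] v1 v2 dist1 dist2 eqE.
  exact: eqE.
apply: IHw; try exact: deltabar_dist.
exact: consistent_deltabar.
Qed.

(* Restricting the behaviour of v to E is its row (qualified: matrix.v also
   exports a [rowE]). *)
Lemma restrictE_obs (v : {ffun Q -> R}) :
  restrictE E (obs out delta v) = Defs.rowE out delta E v.
Proof. by []. Qed.

Lemma restrictE_equivE (v1 v2 : {ffun Q -> R}) :
  restrictE E (obs out delta v1) = restrictE E (obs out delta v2) ->
  equivE out delta E v1 v2.
Proof. by move=> eq_restr e inE; have := congr1 (fun t => t (exist _ e inE)) eq_restr. Qed.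

End Observations.

Theorem mainTheorem8 (R : realFieldType) (Q A : finType)
  (out : Q -> R) (delta : Q -> A -> {ffun Q -> R}) (E : {pred seq A}) :
  is_PA out delta ->
  consistent out delta E ->
  [::] \in E ->
  (* restriction is injective on the image of obs *)
  (forall s1 s2, im_obs out delta s1 -> im_obs out delta s2 ->
     restrictE E s1 = restrictE E s2 -> s1 = s2) /\
  (* and maps the image of obs onto the image of row_E *)
  (forall t : word_in E -> R,
     im_rowE out delta E t <-> exists2 s, im_obs out delta s & restrictE E s = t).
Proof.
move=> [_ delta_dist] cons epsE; split.
  move=> _ _ [v1 dist1 ->] [v2 dist2 ->] /restrictE_equivE eqE.
  exact: equivE_obs eqE.
move=> t; split.
  by move=> [v dist_v ->]; exists (obs out delta v); [exists v | apply: restrictE_obs].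
by move=> [_ [v dist_v ->] <-]; exists v.
Qed.
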